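(* Let $D$ be a pv-monoid (idempotent, with symmetric valuation function) that is left-$\oplus$-distributive, $P$ a nonempty finite set of ports, $\phi$ a PIL formula over $P$, and $\zeta_1,\zeta_2\in PCL(D,P)$. Then $\phi\otimes(\zeta_1\uplus\zeta_2)\equiv(\phi\otimes\zeta_1)\uplus(\phi\otimes\zeta_2)$.
   Context: A valuation monoid $(D,\oplus,\mathrm{val},0)$ consists of a commutative monoid $(D,\oplus,0)$ and a map $\mathrm{val}:D^+\to D$ ($D^+$ = nonempty finite sequences over $D$) with $\mathrm{val}(d)=d$ and $\mathrm{val}(d_1,\dots,d_n)=0$ whenever some $d_i=0$. A pv-monoid $(D,\oplus,\mathrm{val},\otimes,0,1)$ is a valuation monoid with a binary operation $\otimes$ and an element $1$ such that $\mathrm{val}(1,\dots,1)=1$ for any $n\ge1$ arguments, $0\otimes d=d\otimes0=0$, $1\otimes d=d\otimes1=d$. Standing assumption: $D$ is idempotent and $\mathrm{val}$ is symmetric. $D$ is left-$\oplus$-distributive if $d\otimes(d_1\oplus d_2)=(d\otimes d_1)\oplus(d\otimes d_2)$ for all $d,d_1,d_2$. $I(P)$ is the set of nonempty subsets of $P$, $C(P)$ the set of nonempty subsets of $I(P)$. PIL formulas: $\phi::=true\mid p\mid\overline{\phi}\mid\phi\vee\phi$ ($p\in P$), with $\alpha\models_i true$, $\alpha\models_i p$ iff $p\in\alpha$, $\alpha\models_i\overline\phi$ iff $\alpha\not\models_i\phi$, disjunction as usual. PCL formulas: $f::=true\mid\phi\mid\neg f\mid f\sqcup f\mid f+f$;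 $\gamma\models\phi$ iff every $\alpha\in\gamma$ satisfies $\phi$; $\neg,\sqcup$ are complement and union; $\gamma\models f_1+f_2$ iff $\gamma=\gamma_1\cup\gamma_2$ with $\gamma_1,\gamma_2\in C(P)$, $\gamma_1\models f_1,\gamma_2\models f_2$. w$_{\text{pvm}}$PCL formulas ($PCL(D,P)$): $\zeta::=d\mid f\mid\zeta\oplus\zeta\mid\zeta\otimes\zeta\mid\zeta\uplus\zeta\mid *\zeta$ (in particular a PIL formula is such a formula); semantics $\|\zeta\|:C(P)\to D$: $\|d\|(\gamma)=d$; $\|f\|(\gamma)\in\{0,1\}$ is $1$ iff $\gamma\models f$; $\oplus,\otimes$ pointwise; $\|\zeta_1\uplus\zeta_2\|(\gamma)=\bigoplus(\|\zeta_1\|(\gamma_1)\otimes\|\zeta_2\|(\gamma_2))$ over disjoint $\gamma_1,\gamma_2\in C(P)$ with union $\gamma$; $\|*\zeta\|(\gamma)=\bigoplus_{n>0}\bigoplus\mathrm{val}(\|\zeta\|(\gamma_1),\dots,\|\zeta\|(\gamma_n))$ over pairwise disjoint $\gamma_1,\dots,\gamma_n\in C(P)$ with union $\gamma$. $\equiv$ means equality of semantics on all of $C(P)$. An empty $\oplus$-sum is $0$. *)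

From Stdlib Require List.
From Stdlib Require Import Permutation.
From mathcomp Require Import all_boot.
Set Implicit Arguments. Unset Strict Implicit. Unset Printing Implicit Defensive.

(* A pv-monoid (D, (+), val, (x), 0, 1).  val is total on seq D; only its
   values on nonempty sequences matter (the empty sequence is never used). *)
Record pvMonoid := PVMonoid {
  car :> Type;
  pv_add : car -> car -> car;
  pv_val : seq car -> car;
  pv_mul : car -> car -> car;
  pv_zero : car;
  pv_one : car;
  pv_addC : forall x y, pv_add x y = pv_add y x;
  pv_addA : forall x y z, pv_add x (pv_add y z) = pv_add (pv_add x y) z;
  pv_add0 : forall x, pv_add pv_zero x = x;
  pv_val1 : forall d, pv_val [:: d] = d;
  pv_val0 : forall s, List.In pv_zero s -> pv_val s = pv_zero;
  pv_valone : forall n, pv_val (nseq n.+1 pv_one) = pv_one;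
  pv_mul0l : forall d, pv_mul pv_zero d = pv_zero;
  pv_mul0r : forall d, pv_mul d pv_zero = pv_zero;
  pv_mul1l : forall d, pv_mul pv_one d = d;
  pv_mul1r : forall d, pv_mul d pv_one = d
}.

Definition idempotent_pv (D : pvMonoid) := forall d : D, pv_add d d = d.
Definition symmetric_val (D : pvMonoid) :=
  forall s t : seq D, Permutation s t -> pv_val s = pv_val t.
Definition left_add_distributive (D : pvMonoid) :=
  forall d d1 d2 : D, pv_mul d (pv_add d1 d2) = pv_add (pv_mul d d1) (pv_mul d d2).

Definition pv_sum (D : pvMonoid) (l : seq D) : D := foldr (@pv_add D) (pv_zero D) l.

Section Logic.
Variable P : finType.

Definition inC (g : {set {set P}}) : bool := (g != set0) && (set0 \notin g).

Inductive PIL : Type :=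
| PIL_true : PIL
| PIL_port : P -> PIL
| PIL_neg : PIL -> PIL
| PIL_or : PIL -> PIL -> PIL.

Fixpoint PIL_sat (phi : PIL) (a : {set P}) : bool :=
  match phi with
  | PIL_true => true
  | PIL_port p => p \in a
  | PIL_neg f => ~~ PIL_sat f a
  | PIL_or f1 f2 => PIL_sat f1 a || PIL_sat f2 a
  end.

Inductive PCL : Type :=
| PCL_true : PCL
| PCL_pil : PIL -> PCL
| PCL_neg : PCL -> PCL
| PCL_join : PCL -> PCL -> PCL
| PCL_plus : PCL -> PCL -> PCL.

Fixpoint PCL_sat (f : PCL) (g : {set {set P}}) : bool :=
  match f with
  | PCL_true => true
  | PCL_pil phi => [forall a in g, PIL_sat phi a]
  | PCL_neg f1 => ~~ PCL_sat f1 g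
  | PCL_join f1 f2 => PCL_sat f1 g || PCL_sat f2 g
  | PCL_plus f1 f2 =>
      [exists g1 : {set {set P}}, exists g2 : {set {set P}},
         [&& inC g1, inC g2, g1 :|: g2 == g, PCL_sat f1 g1 & PCL_sat f2 g2]]
  end.

Variable D : pvMonoid.

Inductive wPCL : Type :=
| W_const : D -> wPCL
| W_pcl : PCL -> wPCL
| W_add : wPCL -> wPCL -> wPCL
| W_mul : wPCL -> wPCL -> wPCL
| W_uplus : wPCL -> wPCL -> wPCL
| W_star : wPCL -> wPCL.

Definition splits2 (g : {set {set P}}) : seq ({set {set P}} * {set {set P}}) :=
  [seq p <- enum [set: {set {set P}} * {set {set P}}] |
     [&& inC p.1, inC p.2, [disjoint p.1 & p.2] & p.1 :|: p.2 == g]].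

Definition is_decomp (g : {set {set P}}) (s : seq {set {set P}}) : bool :=
  [&& all inC s, pairwise (fun a b : {set {set P}} => [disjoint a & b]) s &
      \bigcup_(a <- s) a == g].

Definition decomps_n (g : {set {set P}}) (n : nat) : seq (seq {set {set P}}) :=
  [seq tval t | t <- enum [set: n.-tuple {set {set P}}] & is_decomp g (tval t)].

(* all n > 0; for n > #|g| there are no such decompositions (the gi are
   nonempty and pairwise disjoint subsets of g), so those summands are empty *)
Definition decomps (g : {set {set P}}) : seq (seq {set {set P}}) :=
  flatten [seq decomps_n g n | n <- iota 1 #|g|].

Fixpoint wsem (z : wPCL) (g : {set {set P}}) : D :=
  match z with
  | W_const d => d
  | W_pcl f => if PCL_sat f g then pv_one D else pv_zero D
  | W_add z1 z2 => pv_add (wsem z1 g) (wsem z2 g)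
  | W_mul z1 z2 => pv_mul (wsem z1 g) (wsem z2 g)
  | W_uplus z1 z2 =>
      pv_sum [seq pv_mul (wsem z1 p.1) (wsem z2 p.2) | p <- splits2 g]
  | W_star z1 =>
      pv_sum [seq pv_val [seq wsem z1 a | a <- s] | s <- decomps g]
  end.

Definition W_pil (phi : PIL) : wPCL := W_pcl (PCL_pil phi).

End Logic.

From mathcomp Require Import all_boot.

(* A PIL formula takes only the values 0 and 1, and it holds on a union
   g1 :|: g2 exactly when it holds on g1 and on g2.  So multiplying a split
   term by the weight of phi on g is the same as weighting each factor by phi
   on its own part. *)

Set Implicit Arguments.
Unset Strict Implicit.
Unset Printing Implicit Defensive.

Section PvIndicator.
Variable D : pvMonoid.

Definition pv_ind (b : bool) : D := if b then pv_one D else pv_zero D.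

Lemma pv_mul_ind_sum (b : bool) (s : seq D) :
  pv_mul (pv_ind b) (pv_sum s) = pv_sum [seq pv_mul (pv_ind b) x | x <- s].
Proof.
case: b; rewrite /pv_ind.
  by under eq_map do rewrite pv_mul1l; rewrite map_id pv_mul1l.
rewrite pv_mul0l; elim: s => [|x s IHs] //=.
by rewrite pv_mul0l -IHs pv_add0.
Qed.

Lemma pv_ind_andM (b1 b2 : bool) (x y : D) :
  pv_mul (pv_ind (b1 && b2)) (pv_mul x y) =
  pv_mul (pv_mul (pv_ind b1) x) (pv_mul (pv_ind b2) y).
Proof. by case: b1; case: b2; rewrite /= ?pv_mul1l ?pv_mul0l ?pv_mul0r. Qed.

End PvIndicator.

Section Splits.
Variable P : finType.

Lemma PIL_sat_all_setU (phi : PIL P) (g1 g2 : {set {set P}}) :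
  [forall a in g1 :|: g2, PIL_sat phi a] =
  [forall a in g1, PIL_sat phi a] && [forall a in g2, PIL_sat phi a].
Proof.
apply/forall_inP/andP => [H | [/forall_inP H1 /forall_inP H2] a].
  by split; apply/forall_inP => a Ha; apply: H; rewrite in_setU Ha ?orbT.
by rewrite in_setU => /orP [/H1 | /H2].
Qed.

Lemma splits2_setU (g : {set {set P}}) p : p \in splits2 g -> p.1 :|: p.2 = g.
Proof. by rewrite mem_filter => /andP [/and4P [_ _ _ /eqP]]. Qed.

End Splits.

Theorem mainTheorem8 (D : pvMonoid) (P : finType) (hP : 0 < #|P|)
  (hidem : idempotent_pv D) (hsym : symmetric_val D)
  (hdist : left_add_distributive D)
  (phi : PIL P) (z1 z2 : wPCL P D) :
  forall g : {set {set P}}, inC g ->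
    wsem (W_mul (W_pil D phi) (W_uplus z1 z2)) g =
    wsem (W_uplus (W_mul (W_pil D phi) z1) (W_mul (W_pil D phi) z2)) g.
Proof.
move=> g _ /=.
rewrite -/(pv_ind D _) pv_mul_ind_sum -map_comp.
congr pv_sum; apply/eq_in_map => p /splits2_setU {1}<- /=.
by rewrite PIL_sat_all_setU pv_ind_andM.
Qed.
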